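(* For every $n\ge 2$, the relation algebra $A_n$ is representable over $(\mathbb{Z}/2\mathbb{Z})^{3k+1}$ (a set of $2^{3k+1}$ points) for all sufficiently large $k\in\omega$. In particular, for $n\ge 14$ it suffices to take $k=n$, so $A_n$ has a representation over a set of $2^{3n+1}$ points for all $n\ge 14$.
   Context: For $n\ge 1$, $A_n$ denotes the finite integral symmetric relation algebra with atoms $1'$ (identity), $r$, $b_1,\dots,b_n$, all symmetric, in which a diversity cycle $xyz$ (with $x,y,z$ diversity atoms) is mandatory (i.e. $x;y\ge z$) if and only if it involves the atom $r$, and is forbidden (i.e. $x;y\cdot z=0$) otherwise. A representation of such a (simple) relation algebra over a set $U$ is an embedding into the full relation algebra $\langle \mathcal P(U\times U),\cup,{}^c,\circ,{}^{-1},\mathrm{Id}_U\rangle$. *)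

From HB Require Import structures.
From mathcomp Require Import all_boot all_order all_algebra.
Set Implicit Arguments. Unset Strict Implicit. Unset Printing Implicit Defensive.

(* Atoms of A_n:  None = 1' (identity),  Some None = r,  Some (Some i) = b_i. *)
Definition atom (n : nat) : finType := option (option 'I_n).

Definition idA {n} : atom n := None.
Definition rA {n} : atom n := Some None.
Definition is_div {n} (a : atom n) : bool := a != idA.

(* Composition of atoms in A_n (all atoms symmetric):
   1';y = {y}, x;1' = {x}; for diversity atoms x,y:
   1' <= x;y iff x = y (since x converse = x), and a diversity atom z is
   below x;y iff the cycle xyz involves r (mandatory), otherwise forbidden. *)
Definition atom_comp {n} (x y : atom n) : {set atom n} :=
  if x == idA then [set y]
  else if y == idA then [set x]
  else (if x == y then [set idA] else set0) :|:
       [set z | is_div z && [|| x == rA, y == rA | z == rA]].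

Definition An_join {n} (A B : {set atom n}) := A :|: B.
Definition An_compl {n} (A : {set atom n}) := ~: A.
Definition An_comp {n} (A B : {set atom n}) : {set atom n} :=
  \bigcup_(x in A) \bigcup_(y in B) atom_comp x y.
Definition An_conv {n} (A : {set atom n}) : {set atom n} := A. (* all atoms symmetric *)
Definition An_id {n} : {set atom n} := [set idA].

Definition rel_comp {U : finType} (R S : {set U * U}) : {set U * U} :=
  [set p | [exists z, ((p.1, z) \in R) && ((z, p.2) \in S)]].
Definition rel_conv {U : finType} (R : {set U * U}) : {set U * U} :=
  [set p | (p.2, p.1) \in R].
Definition rel_id (U : finType) : {set U * U} := [set p | p.1 == p.2].

Definition representation (n : nat) (U : finType)
    (f : {set atom n} -> {set U * U}) : Prop :=
  injective f /\
  (forall A B, f (An_join A B) = f A :|: f B) /\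
  (forall A, f (An_compl A) = ~: f A) /\
  (forall A B, f (An_comp A B) = rel_comp (f A) (f B)) /\
  (forall A, f (An_conv A) = rel_conv (f A)) /\
  f An_id = rel_id U.

Definition representable_over (n : nat) (U : finType) : Prop :=
  exists f : {set atom n} -> {set U * U}, representation f.

From HB Require Import structures.
From mathcomp Require Import all_boot all_order all_algebra.
From mathcomp Require Import zify.
Set Implicit Arguments. Unset Strict Implicit. Unset Printing Implicit Defensive.

Import GRing.Theory.

(* Represent A_n on V = (Z/2)^(3k+1) by a colouring of V: the pair (u, v) carries the atom of
   u - v, where 0 gets 1', the nonzero vectors of Hamming weight at most 2k get r, and every
   heavier vector x gets some b_(F x).  Two heavy vectors add up to a light one, so no forbidden
   cycle b_i b_j b_l occurs; the mandatory cycles ask that every colour, or pair of colours, be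
   realised on a heavy x with x + d heavy (for light d), resp. with x + d light and nonzero (for
   any d != 0).  For a uniformly random F, each such requirement has at least 4k^3 disjoint
   candidate witnesses, so it fails with probability at most 2^(-4k); as there are only
   2^(3k+1) (n^2 + n) requirements, a union bound yields a good F once 14 <= k and n <= k. *)

Lemma leq_two_binomial_terms a j : a ^ j.+1 + j.+1 * a ^ j <= a.+1 ^ j.+1.
Proof.
elim: j => [|j IH]; first by rewrite !expn1 expn0 muln1 addn1.
rewrite [a.+1 ^ j.+2]expnS; apply: leq_trans _ (leq_mul (leqnn a.+1) IH).
rewrite !expnS; nia.
Qed.

Lemma predn_expn_half q : 0 < q -> q.-1 ^ q * 2 <= q ^ q.
Proof.
case: q => // a _; apply: leq_trans _ (leq_two_binomial_terms a a); rewrite expnS /=; nia.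
Qed.

Lemma predn_expn_le_pow2 q L M : 0 < q -> q * L <= M -> q.-1 ^ M * 2 ^ L <= q ^ M.
Proof.
move=> q_gt0 qLM; rewrite -(subnK qLM) !expnD -mulnA.
apply: leq_mul; first by case: (_ - _) => // e; rewrite leq_exp2r ?leq_pred.
rewrite !expnM -expnMn; case: L {qLM} => // L.
by rewrite leq_exp2r ?predn_expn_half.
Qed.

Lemma central_binomial_ge a : 4 ^ a <= 'C(a.*2, a) * a.*2.+1.
Proof.
elim: a => [|a IH] //.
have E : a.+1 * 'C(a.+1.*2, a.+1) = 2 * a.*2.+1 * 'C(a.*2, a).
  have := mul_bin_diag a.*2.+1 a; have := mul_bin_down a.*2.+2 a.+1.
  rewrite /= doubleS (_ : a.*2.+2 - a.+1 = a.+1); last by lia.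
  nia.
rewrite expnS -(leq_pmul2l (ltn0Sn a)); move: E IH; rewrite doubleS; nia.
Qed.

Lemma exp4_dominates k : 14 <= k -> 4 * k ^ 3 * k.*2.+1 ^ 2 <= 4 ^ (k - 2).
Proof.
move=> /subnK <-; elim: (k - 14) => [|j IH]; first by rewrite add0n -[14 - 2]/12; lia.
rewrite addSn; set x := j + 14 in IH *; have x14 : 14 <= x by lia.
rewrite (_ : x.+1 - 2 = (x - 2).+1); last by lia.
rewrite [4 ^ _.+1]expnS; apply: leq_trans _ (leq_mul (leqnn 4) IH).
have : x.+1 ^ 3 <= 2 * x ^ 3 by nia.
have : x.+1.*2.+1 ^ 2 <= 2 * x.*2.+1 ^ 2 by nia.
nia.
Qed.

Lemma exp2_dominates k : 14 <= k -> 2 * (k ^ 2 + k) < 2 ^ k.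
Proof.
move=> /subnK <-; elim: (k - 14) => [|j IH]; first by lia.
rewrite addSn [2 ^ _.+1]expnS; set x := j + 14 in IH *.
have : 2 * (x.+1 ^ 2 + x.+1) <= 2 * (2 * (x ^ 2 + x)) by nia.
by move/leq_ltn_trans; apply; rewrite ltn_mul2l.
Qed.

Lemma central_binomial_prod_ge k a c : 14 <= k -> k - 2 <= a + c -> a <= k -> c <= k ->
  4 * k ^ 3 <= 'C(a.*2, a) * 'C(c.*2, c).
Proof.
move=> k14 ac ak ck; set P := 'C(a.*2, a) * 'C(c.*2, c).
have : 4 ^ (a + c) <= P * (a.*2.+1 * c.*2.+1).
  by rewrite expnD mulnACA leq_mul ?central_binomial_ge.
have : 4 ^ (k - 2) <= 4 ^ (a + c) by rewrite leq_pexp2l.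
have := exp4_dominates k14.
have : a.*2.+1 * c.*2.+1 <= k.*2.+1 ^ 2 by rewrite -mulnn leq_mul //; lia.
have : 0 < k.*2.+1 ^ 2 by rewrite expn_gt0.
nia.
Qed.

(** * Counting colourings that avoid patterns on disjoint blocks *)

Lemma forall_in_setD1 (T : finType) (S : {set T}) x (p : pred T) : x \in S ->
  [forall y in S, p y] = p x && [forall y in S :\ x, p y].
Proof.
move=> xS; apply/forall_inP/andP => [Sp | [px S'p] y yS]; last first.
  by case: (eqVneq y x) => [-> // | yx]; apply: (forall_inP S'p); rewrite !inE yx.
by split; [exact: Sp | apply/forall_inP => y /setD1P[_]; exact: Sp].
Qed.

Section RandomColourings.
Variables (V I : finType).
Local Notation N := #|I|.
Local Notation colouring := {ffun V -> I}.

Definition agree (F : colouring) (g : V -> I) (X : {set V}) := [forall x in X, F x == g x].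

Definition ignores (P : pred colouring) (X : {set V}) :=
  forall F G : colouring, {in ~: X, F =1 G} -> P F = P G.

Lemma eq_agree (F G : colouring) g (X : {set V}) : {in X, F =1 G} -> agree F g X = agree G g X.
Proof. by move=> FG; apply: eq_forallb_in => x /FG ->. Qed.

Definition recolour (F : colouring) x b : colouring := [ffun v => if v == x then b else F v].

Lemma card_agree1 (P : pred colouring) x a : ignores P [set x] ->
  #|[pred F | P F & F x == a]| * N = #|P|.
Proof.
move=> Px; have recolourE F b : P (recolour F x b) = P F.
  by apply: Px => v; rewrite !inE ffunE => /negPf ->.
have fibre b : #|[pred F | P F & F x == a]| = #|[pred F | P F & F x == b]|.
  rewrite -(@card_in_imset _ _ (fun F => recolour F x b)); last first.
    move=> F G; rewrite !inE => /andP[_ /eqP Fa] /andP[_ /eqP Ga] FG.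
    apply/ffunP => v; have := congr1 (fun H : colouring => H v) FG; rewrite !ffunE.
    by case: eqP => [-> _|]; rewrite ?Fa ?Ga.
  apply: eq_card => G; rewrite inE; apply/imsetP/andP => [[F] | [PG /eqP Gb]].
    by rewrite inE => /andP[PF _] ->; rewrite recolourE PF ffunE !eqxx.
  exists (recolour G x a); first by rewrite inE recolourE PG ffunE !eqxx.
  apply/ffunP => v; rewrite !ffunE; case: eqP => [->|] //.
rewrite -[in RHS]sum1_card (partition_big (fun F : colouring => F x) predT) //=.
rewrite (eq_bigr (fun=> #|[pred F | P F & F x == a]|)); first by rewrite sum_nat_const mulnC.
by move=> b _; rewrite sum1_card (fibre b); apply: eq_card => F; rewrite !inE.
Qed.

Lemma card_agree (P : pred colouring) g X : ignores P X ->
  #|[pred F | P F & agree F g X]| * N ^ #|X| = #|P|.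
Proof.
move Xc: #|X| => c; elim: c X P Xc => [|c IH] X P Xc PX.
  have -> : X = set0 by apply/eqP; rewrite -cards_eq0 Xc.
  rewrite muln1; apply: eq_card => F; rewrite !inE andb_idr // => _.
  by apply/forall_inP => x; rewrite inE.
have [x0 x0X] : exists x0, x0 \in X by apply/card_gt0P; rewrite Xc.
set Q := [pred F | P F & agree F g (X :\ x0)].
have QX : ignores Q [set x0].
  move=> F G FG; rewrite !inE (PX F G); last first.
    by move=> v; rewrite inE => vX; apply: FG; rewrite !inE; apply: contraNneq vX => ->.
  by congr (_ && _); apply: eq_agree => v /setD1P[vx0 _]; apply: FG; rewrite !inE.
have PX' : ignores P (X :\ x0).
  by move=> F G FG; apply: PX => v; rewrite !inE => vX; apply: FG; rewrite !inE negb_and vX orbT.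
have Xc' : #|X :\ x0| = c by move: Xc; rewrite (cardsD1 x0 X) x0X => -[].
rewrite expnS mulnA (eq_card (B := [pred F | Q F & F x0 == g x0])); last first.
  by move=> F; rewrite !inE /agree (forall_in_setD1 _ x0X) andbA andbAC.
by rewrite card_agree1 //; apply: IH.
Qed.

Lemma card_disagree (P : pred colouring) g X : ignores P X ->
  #|[pred F | P F & ~~ agree F g X]| * N ^ #|X| = #|P| * (N ^ #|X| - 1).
Proof.
move=> PX.
have Pab : #|P| = #|[pred F | P F & agree F g X]| + #|[pred F | P F & ~~ agree F g X]|.
  rewrite -(cardID [pred F | agree F g X] P).
  by congr (_ + _); apply: eq_card => F; rewrite !inE andbC.
by rewrite mulnBr muln1 -{2}(card_agree g PX) {1}Pab mulnDl addKn.
Qed.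

Section Blocks.
Variables (J : finType) (B : J -> {set V}) (g : V -> I) (s : nat).

Definition avoiding (S : {set J}) : {set colouring} :=
  [set F | [forall u in S, ~~ agree F g (B u)]].

Lemma card_avoiding (S : {set J}) :
  {in S &, forall u w, u != w -> [disjoint B u & B w]} -> {in S, forall u, #|B u| = s} ->
  #|avoiding S| * (N ^ s) ^ #|S| = N ^ #|V| * (N ^ s - 1) ^ #|S|.
Proof.
move Sc: #|S| => c; elim: c S Sc => [|c IH] S Sc B_disj B_card.
  have -> : S = set0 by apply/eqP; rewrite -cards_eq0 Sc.
  rewrite !muln1 -card_ffun; apply: eq_card => F; rewrite !inE.
  by apply/forall_inP => u; rewrite inE.
have [u0 u0S] : exists u0, u0 \in S by apply/card_gt0P; rewrite Sc.
have Sc' : #|S :\ u0| = c by move: Sc; rewrite (cardsD1 u0 S) u0S => -[].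
have S'S : {subset S :\ u0 <= S} by move=> u /setD1P[].
have ignores_u0 : ignores [in avoiding (S :\ u0)] (B u0).
  move=> F G FG; rewrite !inE; apply: eq_forallb_in => u /setD1P[uu0 uS].
  congr negb; apply: eq_agree => v vu; apply: FG.
  by rewrite inE (disjointFr (B_disj u u0 uS u0S uu0) vu).
have := card_disagree g ignores_u0; rewrite B_card // => E.
rewrite expnS mulnA.
rewrite (eq_card (B := [pred F | F \in avoiding (S :\ u0) & ~~ agree F g (B u0)])); last first.
  by move=> F; rewrite !inE (forall_in_setD1 _ u0S) andbC.
rewrite E mulnAC IH ?expnSr ?mulnA // => [u w uS wS|u uS]; last exact: B_card (S'S u uS).
exact: B_disj (S'S u uS) (S'S w wS).
Qed.

Lemma card_avoiding_le (S : {set J}) L :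
  {in S &, forall u w, u != w -> [disjoint B u & B w]} -> {in S, forall u, #|B u| = s} ->
  0 < N -> N ^ s * L <= #|S| -> #|avoiding S| * 2 ^ L <= N ^ #|V|.
Proof.
move=> B_disj B_card N_gt0 sLS; have q_gt0 : 0 < N ^ s by rewrite expn_gt0 N_gt0.
have qS_gt0 : 0 < (N ^ s) ^ #|S| by rewrite expn_gt0 q_gt0.
rewrite -(leq_pmul2r qS_gt0) mulnAC card_avoiding // -mulnA leq_mul2l.
by rewrite subn1 predn_expn_le_pow2 ?orbT.
Qed.

End Blocks.

End RandomColourings.

Lemma union_bound (T E : finType) (B : E -> {set T}) c : 0 < #|T| ->
  (forall e, #|B e| * c <= #|T|) -> #|E| < c -> exists x, forall e, x \notin B e.
Proof.
move=> T_gt0 Bc Ec; have c_gt0 : 0 < c by apply: leq_ltn_trans Ec.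
have : #|\bigcup_e B e| * c < #|T| * c.
  apply: leq_ltn_trans (_ : _ <= \sum_e #|B e| * c) _.
    rewrite -big_distrl leq_mul2r /=; apply/orP; right.
    elim/big_ind2: _ => // [|U1 n1 U2 n2 h1 h2]; first by rewrite cards0.
    by rewrite (leq_trans (leq_card_setU _ _)) ?leq_add.
  apply: leq_ltn_trans (leq_sum _ (fun e _ => Bc e)) _.
  by rewrite sum_nat_const mulnC ltn_pmul2l.
rewrite ltn_pmul2r // => ltT.
have [x _ xB] : exists2 x, x \in [set: T] & x \notin \bigcup_e B e.
  by apply/subsetPn; apply: contraTN ltT => /subset_leq_card; rewrite cardsT -leqNgt.
by exists x => e; apply: contra xB => xe; apply/bigcupP; exists e.
Qed.

(** * Cayley representations of A_n *)

Section AtomComposition.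
Variable n : nat.
Implicit Types a b : atom n.

Lemma atom_comp_idl b : atom_comp idA b = [set b].
Proof. by rewrite /atom_comp eqxx. Qed.

Lemma atom_comp_idr a : atom_comp a idA = [set a].
Proof. by rewrite /atom_comp; case: eqP => [->|]; rewrite ?eqxx. Qed.

Lemma atom_comp_div a b : is_div a -> is_div b ->
  atom_comp a b = (if a == b then [set idA] else set0) :|:
                  [set z | is_div z && [|| a == rA, b == rA | z == rA]].
Proof. by rewrite /is_div /atom_comp => /negPf-> /negPf->. Qed.

Lemma idA_in_atom_comp_diag a : idA \in atom_comp a a.
Proof.
have [->|a_div] := eqVneq a idA; first by rewrite atom_comp_idl set11.
by rewrite atom_comp_div // eqxx !inE eqxx.
Qed.

End AtomComposition.

Section Cayley.
Local Open Scope ring_scope.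
Variables (n : nat) (V : finZmodType) (col : V -> atom n).

Definition cayley (A : {set atom n}) : {set V * V} := [set p | col (p.1 - p.2) \in A].

Hypothesis col_idA : forall x, (col x == idA) = (x == 0).
Hypothesis colN : forall x, col (- x) = col x.
Hypothesis col_add : forall x y, col (x + y) \in atom_comp (col x) (col y).
Hypothesis col_split : forall a b d, col d \in atom_comp a b ->
  exists x, col x = a /\ col (d - x) = b.

Lemma col_surj a : exists x, col x = a.
Proof.
have col0 : col 0 \in atom_comp a a.
  by rewrite (_ : col 0 = idA) ?idA_in_atom_comp_diag //; apply/eqP; rewrite col_idA.
by have [x [xa _]] := col_split col0; exists x.
Qed.

Lemma cayley_representation : representation cayley.
Proof.
split.
  move=> A B eqAB; apply/setP => a; have [x <-] := col_surj a.
  by have := congr1 (fun R : {set V * V} => (x, 0) \in R) eqAB; rewrite !inE /= subr0.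
split; first by move=> A B; apply/setP => p; rewrite !inE.
split; first by move=> A; apply/setP => p; rewrite !inE.
split.
  move=> A B; apply/setP => -[u w]; rewrite !inE /=; apply/bigcupP/existsP.
    move=> [a aA] /bigcupP[b bB] /col_split[x [xa xb]].
    by exists (u - x); rewrite !inE /= opprB addrC subrK xa aA addrAC xb.
  move=> [v /andP[]]; rewrite !inE /= => uvA vwB; exists (col (u - v)) => //.
  apply/bigcupP; exists (col (v - w)) => //.
  by have := col_add (u - v) (v - w); rewrite addrA subrK.
split; first by move=> A; apply/setP => -[u w]; rewrite !inE /= -opprB colN.
by apply/setP => -[u w]; rewrite !inE /= col_idA subr_eq0.
Qed.

End Cayley.

Section HeavyColouring.
Local Open Scope ring_scope.
Variables (n : nat) (V : finZmodType) (heavy : pred V) (F : V -> 'I_n).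

Hypothesis oppV : forall x : V, - x = x.
Hypothesis V_nontrivial : exists d : V, d != 0.
Hypothesis heavy_sumfree : forall x y, heavy x -> heavy y -> ~~ heavy (x + y).
Hypothesis light_pairs : forall d, d != 0 ->
  exists x, [/\ x != 0, ~~ heavy x, x + d != 0 & ~~ heavy (x + d)].
Hypothesis heavy_pairs : forall d, d != 0 -> ~~ heavy d -> forall i j,
  exists x, [/\ heavy x, heavy (x + d), F x = i & F (x + d) = j].
Hypothesis heavy_light_pairs : forall d, d != 0 -> forall i,
  exists x, [/\ heavy x, F x = i, x + d != 0 & ~~ heavy (x + d)].

Definition colour (x : V) : atom n :=
  if x == 0 then idA else if heavy x then Some (Some (F x)) else rA.

Lemma subV (d x : V) : d - x = x + d.
Proof. by rewrite oppV addrC. Qed.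

Lemma addrVK (x d : V) : x + d + d = x.
Proof. by rewrite -addrA -(subV d d) subrr addr0. Qed.

Lemma heavy_neq0 x : heavy x -> x != 0.
Proof.
by move=> hx; apply/eqP => x0; have := heavy_sumfree hx hx; rewrite x0 addr0 -x0 hx.
Qed.

Lemma colour0 : colour 0 = idA.
Proof. by rewrite /colour eqxx. Qed.

Lemma colour_heavy x : heavy x -> colour x = Some (Some (F x)).
Proof. by move=> hx; rewrite /colour (negPf (heavy_neq0 hx)) hx. Qed.

Lemma colour_light x : x != 0 -> ~~ heavy x -> colour x = rA.
Proof. by rewrite /colour => /negPf-> /negPf->. Qed.

Variant colour_spec x : atom n -> Type :=
  | ColourId of x = 0 : colour_spec x idA
  | ColourLight of x != 0 & ~~ heavy x : colour_spec x rA
  | ColourHeavy of heavy x : colour_spec x (Some (Some (F x))).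

Lemma colourP x : colour_spec x (colour x).
Proof.
rewrite /colour; case: eqP => [-> | /eqP x0]; first by constructor.
by case: ifP => hx; constructor; rewrite ?hx.
Qed.

Lemma colour_idA x : (colour x == idA) = (x == 0).
Proof. by case: colourP => [->|/negPf->|/heavy_neq0/negPf->]; rewrite ?eqxx. Qed.

Lemma colourN x : colour (- x) = colour x.
Proof. by rewrite oppV. Qed.

Lemma colour_add x y : colour (x + y) \in atom_comp (colour x) (colour y).
Proof.
have [->|x0] := eqVneq x 0; first by rewrite add0r colour0 atom_comp_idl set11.
have [->|y0] := eqVneq y 0; first by rewrite addr0 colour0 atom_comp_idr set11.
rewrite atom_comp_div /is_div ?colour_idA // !inE colour_idA.
have [xy0|xy0] := eqVneq (x + y) 0.
  have yx : y = x by apply/eqP; rewrite -(oppV x) -addr_eq0 addrC xy0.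
  by rewrite xy0 colour0 yx eqxx set11.
apply/orP; right => /=.
case: (colourP x) => [x_0|_ _|hx]; first by rewrite x_0 eqxx in x0.
  by rewrite eqxx.
case: (colourP y) => [y_0|_ _|hy]; first by rewrite y_0 eqxx in y0.
  by rewrite eqxx orbT.
by rewrite colour_light ?heavy_sumfree ?eqxx ?orbT.
Qed.

Lemma colour_onto a : exists x, colour x = a.
Proof.
have [d d0] := V_nontrivial.
case: a => [[i|]|]; last by exists 0; rewrite colour0.
  by have [x [hx <- _ _]] := heavy_light_pairs d0 i; exists x; rewrite colour_heavy.
by have [x [x0 lx _ _]] := light_pairs d0; exists x; rewrite colour_light.
Qed.

Lemma colour_split a b d : colour d \in atom_comp a b ->
  exists x, colour x = a /\ colour (d - x) = b.
Proof.
case: a => [a|]; last by rewrite atom_comp_idl => /set1P db; exists 0; rewrite colour0 subr0.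
case: b => [b|]; last by rewrite atom_comp_idr => /set1P da; exists d; rewrite subrr colour0.
rewrite atom_comp_div // !inE => /orP[].
  case: eqP => [[<-]|]; last by rewrite inE.
  rewrite inE colour_idA => /eqP->; have [x xa] := colour_onto (Some a).
  by exists x; rewrite sub0r colourN xa.
rewrite /is_div colour_idA => /andP[d0 dr].
case: a b dr => [i|] [j|] /= dr.
- have ld : ~~ heavy d by apply: contraTN dr => /colour_heavy->.
  have [x [hx hxd xi xdj]] := heavy_pairs d0 ld i j.
  by exists x; rewrite subV !colour_heavy // xi xdj.
- have [x [hx xi xd0 lxd]] := heavy_light_pairs d0 i.
  by exists x; rewrite subV colour_heavy // colour_light // xi.
- have [y [hy yj yd0 lyd]] := heavy_light_pairs d0 j.
  by exists (y + d); rewrite subV addrVK colour_light // colour_heavy // yj.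
- have [x [x0 lx xd0 lxd]] := light_pairs d0.
  by exists x; rewrite subV !colour_light.
Qed.

Theorem heavy_colouring_representation : representation (cayley colour).
Proof.
exact: cayley_representation colour_idA colourN colour_add colour_split.
Qed.

End HeavyColouring.

(** * Hamming weight on (Z/2)^m *)

Lemma exists_subset_card (T : finType) (A : {set T}) j : j <= #|A| ->
  exists2 B : {set T}, B \subset A & #|B| = j.
Proof.
move=> jA; have : 0 < #|[set B : {set T} | B \subset A & #|B| == j]| by rewrite cards_draws bin_gt0.
by case/card_gt0P => B; rewrite inE => /andP[BA /eqP Bj]; exists B.
Qed.

Lemma F2P (a : 'F_2) : a = 0%R \/ a = 1%R.
Proof. by case: a => -[|[|//]] ?; [left|right]; apply: val_inj. Qed.

Section DisjointUnion.
Variables (T : finType) (X Y A C : {set T}).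
Hypotheses (AX : A \subset X) (CY : C \subset Y) (XY : [disjoint X & Y]).

Lemma setUI_disjointl : (A :|: C) :&: X = A.
Proof.
rewrite setIUl (setIidPl AX) disjoint_setI0 ?setU0 //.
by apply: disjointWl CY _; rewrite disjoint_sym.
Qed.

Lemma setUI_disjointr : (A :|: C) :&: Y = C.
Proof.
rewrite setIUl (setIidPl CY) disjoint_setI0 ?set0U //.
exact: disjointWl AX XY.
Qed.

End DisjointUnion.

Section BinaryVectors.
Variable m : nat.
Local Notation V := 'rV['F_2]_m.
Implicit Types (x y : V) (X Y : {set 'I_m}) (a c : nat).

Definition supp (x : V) : {set 'I_m} := [set i | x ord0 i != 0%R].
Definition vec (S : {set 'I_m}) : V := \row_i (i \in S)%:R%R.
Definition wt (x : V) := #|supp x|.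

Lemma suppK : cancel vec supp.
Proof. by move=> S; apply/setP => i; rewrite !inE mxE; case: (i \in S). Qed.

Lemma oppV (x : V) : (- x)%R = x.
Proof. by apply/rowP => i; rewrite mxE; case: (F2P (x ord0 i)) => ->; apply: val_inj. Qed.

Lemma supp_add x y : supp (x + y)%R = (supp x :|: supp y) :\: (supp x :&: supp y).
Proof.
apply/setP => i; rewrite !inE mxE.
by case: (F2P (x ord0 i)) => ->; case: (F2P (y ord0 i)) => ->.
Qed.

Lemma wt_eq0 x : (wt x == 0) = (x == 0%R).
Proof.
rewrite cards_eq0; apply/eqP/eqP => [x0|->]; last by apply/setP => i; rewrite !inE mxE.
apply/rowP => i; rewrite !mxE; apply/eqP; apply: contraT => xi.
by have := in_set0 i; rewrite -x0 inE xi.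
Qed.

Lemma wt_le x : wt x <= m.
Proof. by rewrite -[m]card_ord max_card. Qed.

Lemma wt_vec S : wt (vec S) = #|S|.
Proof. by rewrite /wt suppK. Qed.

Lemma wt_add x y : wt (x + y)%R + 2 * #|supp x :&: supp y| = wt x + wt y.
Proof.
rewrite /wt supp_add; set A := supp x; set B := supp y.
have AIB : A :&: B \subset A :|: B := subset_trans (subsetIl A B) (subsetUl A B).
by rewrite cardsD (setIidPr AIB) mul2n -addnn addnA subnK ?subset_leq_card // cardsUI.
Qed.

Lemma card_suppC x : #|~: supp x| = m - wt x.
Proof. by rewrite cardsCs setCK card_ord. Qed.

Lemma card_suppD1 x p : p \in supp x -> #|supp x :\ p| = (wt x).-1.
Proof. by move=> px; rewrite [wt x](cardsD1 p) px. Qed.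

Lemma disjoint_suppD1C x p : [disjoint supp x :\ p & ~: supp x].
Proof. by rewrite disjoints_subset setCK subD1set. Qed.

Definition zero_family (X Y : {set 'I_m}) (a c : nat) : {set V} :=
  [set vec (~: (p.1 :|: p.2)) | p in setX [set A : {set 'I_m} | A \subset X & #|A| == a]
                                          [set C : {set 'I_m} | C \subset Y & #|C| == c]].

Lemma zero_familyP X Y a c x : [disjoint X & Y] -> x \in zero_family X Y a c ->
  [/\ wt x + (a + c) = m, #|supp x :&: X| + a = #|X|, #|supp x :&: Y| + c = #|Y|
    & ~: (X :|: Y) \subset supp x].
Proof.
move=> XY /imsetP[[A C]]; rewrite !inE /= => /andP[/andP[AX /eqP <-] /andP[CY /eqP <-]] ->.
have ZX := setUI_disjointl AX CY XY; have ZY := setUI_disjointr AX CY XY.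
have AC : [disjoint A & C] by apply: disjointWl AX _; apply: disjointWr CY _.
have split_card W : #|~: (A :|: C) :&: W| + #|(A :|: C) :&: W| = #|W|.
  by rewrite addnC -(cardsID (A :|: C) W) setDE !(setIC W).
rewrite /wt suppK -(split_card X) -(split_card Y) ZX ZY setCS setUSS //; split=> //.
transitivity #|'I_m|; last exact: card_ord.
by rewrite -(cardsC (A :|: C)) addnC -[#|A| + #|C|]cardsUI disjoint_setI0 // cards0 addn0.
Qed.

Lemma card_zero_family X Y a c : [disjoint X & Y] ->
  #|zero_family X Y a c| = 'C(#|X|, a) * 'C(#|Y|, c).
Proof.
move=> XY; rewrite card_in_imset ?cardsX ?cards_draws // => -[A1 C1] [A2 C2].
rewrite !inE /= => /andP[/andP[A1X _] /andP[C1Y _]] /andP[/andP[A2X _] /andP[C2Y _]].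
move=> /(can_inj suppK)/setC_inj E; congr pair.
  by rewrite -(setUI_disjointl A1X C1Y XY) E (setUI_disjointl A2X C2Y XY).
by rewrite -(setUI_disjointr A1X C1Y XY) E (setUI_disjointr A2X C2Y XY).
Qed.

End BinaryVectors.

Section HeavyVectors.
Variable k : nat.
Local Notation m := (3 * k + 1).
Local Notation V := 'rV['F_2]_m.
Implicit Types (x d : V) (S : {set 'I_m}).

Definition heavy x := 2 * k < wt x.

Lemma heavy_sumfree x y : heavy x -> heavy y -> ~~ heavy (x + y)%R.
Proof.
rewrite /heavy -leqNgt => hx hy; have := wt_add x y; have := cardsUI (supp x) (supp y).
have : #|supp x :|: supp y| <= m by rewrite -[m in _ <= m]card_ord max_card.
rewrite /wt in hx hy *; lia.
Qed.

Lemma light_pairs d : 0 < k -> d != 0%R ->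
  exists x, [/\ x != 0%R, ~~ heavy x, (x + d)%R != 0%R & ~~ heavy (x + d)%R].
Proof.
rewrite -wt_eq0 => k_gt0 d0; have dm := wt_le d.
suff [S [S0 Sk Sd0 Sdk]] : exists S, [/\ #|S| != 0, #|S| <= 2 * k,
    wt (vec S + d)%R != 0 & wt (vec S + d)%R <= 2 * k].
  by exists (vec S); rewrite -!wt_eq0 /heavy -!leqNgt wt_vec.
have wtS S : wt (vec S + d)%R + 2 * #|S :&: supp d| = #|S| + wt d.
  by have := wt_add (vec S) d; rewrite suppK wt_vec.
have [t1 | t2] := leqP (wt d) 1.
  have [j] : exists j, j \in ~: supp d.
    by apply/card_gt0P; have := cardsC (supp d); rewrite card_ord -/(wt d); lia.
  rewrite inE => jd.
  exists (j |: supp d); have := wtS (j |: supp d).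
  by rewrite (setIidPr (subsetUr _ _)) cardsU1 jd add1n -/(wt d) => ?; split; lia.
have [S Sd St] : exists2 S : {set 'I_m}, S \subset supp d & #|S| = (wt d)./2.
  by apply: exists_subset_card; rewrite -/(wt d); lia.
by exists S; have := wtS S; rewrite (setIidPl Sd) St => ?; split; lia.
Qed.

(* [p] lies in [supp x] but not in [supp (x + d)], so the pairs [{x, x + d}] are disjoint. *)
Definition pair_family d p := zero_family (supp d :\ p) (~: supp d) (wt d)./2 (k - (wt d).+1./2).

Lemma pair_familyP d p x : p \in supp d -> ~~ heavy d -> x \in pair_family d p ->
  [/\ heavy x, heavy (x + d)%R & (x + d)%R \notin pair_family d p].
Proof.
rewrite /heavy -leqNgt => pd dk xF; have XY := disjoint_suppD1C d p.
have pF y : y \in pair_family d p -> p \in supp y.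
  case/(zero_familyP XY) => _ _ _ /subsetP; apply.
  by rewrite !(in_setC, in_setU, in_setD1) eqxx pd.
have [wx xX _ _] := zero_familyP XY xF; have px := pF x xF.
have Dx : #|supp x :&: supp d| = 1 + #|supp x :&: (supp d :\ p)|.
  have -> : supp x :&: supp d = p |: (supp x :&: (supp d :\ p)).
    apply/setP => i; rewrite !(in_setI, in_setU1, in_setD1).
    by case: eqP => [->|]; rewrite ?px ?pd.
  by rewrite cardsU1 !(in_setI, in_setD1) eqxx andbF.
have t_gt0 : 0 < wt d by apply/card_gt0P; exists p.
have := wt_add x d; rewrite Dx (card_suppD1 pd) in xX *; rewrite -/(wt x) in wx *.
move=> wxd; split; [lia | lia | apply/negP => /pF].
by rewrite supp_add !(in_setD, in_setU, in_setI) px pd.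
Qed.

Lemma card_pair_family d p : 14 <= k -> p \in supp d -> ~~ heavy d ->
  4 * k ^ 3 <= #|pair_family d p|.
Proof.
rewrite /heavy -leqNgt => k14 pd dk; have t_gt0 : 0 < wt d by apply/card_gt0P; exists p.
rewrite card_zero_family ?disjoint_suppD1C // (card_suppD1 pd) card_suppC -bin_sub; last by lia.
by apply: leq_trans (central_binomial_prod_ge k14 _ _ _) (leq_mul (leq_bin2l _ _) (leq_bin2l _ _));
  lia.
Qed.

(* Its members have weight [2k+1], and [x + d] has weight [2k + 1 - wt d + 2b], which lies in
   [[1, 2k]] by the choice of [b]. *)
Definition heavy_light_family d :=
  let b := minn k (wt d).-1./2 in zero_family (~: supp d) (supp d) (k - b) b.

Lemma heavy_light_familyP d x : 0 < k -> d != 0%R -> x \in heavy_light_family d ->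
  [/\ heavy x, (x + d)%R != 0%R & ~~ heavy (x + d)%R].
Proof.
rewrite -wt_eq0 /heavy -leqNgt => k_gt0 d0.
have XY : [disjoint ~: supp d & supp d] by rewrite disjoints_subset.
case/(zero_familyP XY) => wx _ xD _; have := wt_add x d; have := wt_le d.
rewrite -wt_eq0 -/(wt d) -/(wt x) in wx xD * => dm wxd; split; lia.
Qed.

Lemma card_heavy_light_family d : 14 <= k -> d != 0%R -> 4 * k ^ 3 <= #|heavy_light_family d|.
Proof.
rewrite -wt_eq0 => k14 d0; have dm := wt_le d.
have XY : [disjoint ~: supp d & supp d] by rewrite disjoints_subset.
rewrite card_zero_family // card_suppC -/(wt d).
by apply: leq_trans (central_binomial_prod_ge k14 _ _ _) (leq_mul (leq_bin2l _ _) (leq_bin2l _ _));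
  lia.
Qed.

End HeavyVectors.

(** * A random colouring of the heavy vectors *)

Section RandomHeavyColouring.
Variables k n : nat.
Hypotheses (k14 : 14 <= k) (n_gt0 : 0 < n) (nk : n <= k).
Local Notation V := 'rV['F_2]_(3 * k + 1).
Local Notation colouring := {ffun V -> 'I_n}.

(* The pair family of [d] is disjoint from its translate by [d], so the single target function
   below asks for colour [i] on [x] and colour [j] on [x + d]. *)
Definition bad_event (e : (V * 'I_n * 'I_n) + (V * 'I_n)) : {set colouring} :=
  match e with
  | inl (d, i, j) =>
      if [pick p in supp d] is Some p then
        if heavy d then set0 else
        avoiding (fun x => [set x; x + d]%R)
                 (fun y => if y \in pair_family d p then i else j) (pair_family d p)
      else set0
  | inr (d, i) =>
      if d == 0%R then set0 else avoiding (fun x => [set x]) (fun=> i) (heavy_light_family d)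
  end.

Lemma card_bad_event e : #|bad_event e| * 2 ^ (4 * k) <= n ^ #|V|.
Proof.
case: e => [[[d i] j] | [d i]] /=.
  case: pickP => [p pd | _]; last by rewrite cards0.
  case: ifP => hd; first by rewrite cards0.
  have d0 : d != 0%R by rewrite -wt_eq0 -lt0n; apply/card_gt0P; exists p.
  rewrite -[X in X ^ #|V|](card_ord n).
  apply: (@card_avoiding_le _ _ _ _ _ 2); rewrite ?card_ord //.
  - move=> u w uF wF uw.
    have [_ _ udF] := pair_familyP pd (negbT hd) uF.
    have [_ _ wdF] := pair_familyP pd (negbT hd) wF.
    rewrite -setI_eq0; apply/eqP/setP => y; rewrite !inE; apply/negbTE/negP.
    case/andP => /orP[]/eqP-> /orP[]/eqP E.
    + by rewrite E eqxx in uw.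
    + by rewrite -E uF in wdF.
    + by rewrite E wF in udF.
    + by rewrite (addIr _ E) eqxx in uw.
  - by move=> u _; rewrite cards2 -{1}(addr0 u) (inj_eq (addrI u)) eq_sym d0.
  apply: leq_trans _ (card_pair_family k14 pd (negbT hd)).
  by rewrite mulnCA [k ^ 3]expnSr leq_mul2l leq_mul2r leq_exp2r ?nk ?orbT.
have [_ | d0] := eqVneq d 0%R; first by rewrite cards0.
rewrite -[X in X ^ #|V|](card_ord n).
apply: (@card_avoiding_le _ _ _ _ _ 1); rewrite ?card_ord //.
- by move=> u w _ _ uw; rewrite disjoints1 inE.
- by move=> u _; rewrite cards1.
apply: leq_trans _ (card_heavy_light_family k14 d0).
by rewrite expn1 mulnCA [k ^ 3]expnSr leq_mul2l leq_mul2r; nia.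
Qed.

Lemma exists_good_colouring : exists F : colouring, forall e, F \notin bad_event e.
Proof.
apply: (@union_bound _ _ bad_event (2 ^ (4 * k))); rewrite ?card_ffun ?card_ord.
- by rewrite expn_gt0 n_gt0.
- exact: card_bad_event.
rewrite card_sum !card_prod !card_ord card_mx card_Fp // mul1n.
rewrite (_ : 4 * k = (3 * k + 1) + k.-1); last by lia.
rewrite [2 ^ (_ + k.-1)]expnD -!mulnA -mulnDr ltn_pmul2l ?expn_gt0 //.
have := exp2_dominates k14; rewrite -[in 2 ^ k](prednK (_ : 0 < k)); last by lia.
rewrite [2 ^ _.+1]expnS ltn_mul2l /= => /(leq_ltn_trans _); apply.
by rewrite -mulnn leq_add // leq_mul.
Qed.

Theorem representable_rV_F2 : representable_over n V.
Proof.
have [F goodF] := exists_good_colouring; have k_gt0 : 0 < k by lia.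
have pick_supp (d : V) : d != 0%R -> exists2 p, [pick p in supp d] = Some p & p \in supp d.
  rewrite -wt_eq0 -lt0n => /card_gt0P[p0 p0d].
  by case: pickP => [p pd | /(_ p0)]; [exists p | rewrite p0d].
exists (cayley (colour (@heavy k) F)); apply: heavy_colouring_representation.
- exact: oppV.
- by exists (vec setT); rewrite -wt_eq0 wt_vec cardsT card_ord addn1.
- exact: heavy_sumfree.
- by move=> d; apply: light_pairs.
- move=> d d0 hd i j; have [p pick_p pd] := pick_supp d d0.
  have := goodF (inl (d, i, j)); rewrite /= pick_p (negPf hd) inE.
  case/forall_inPn=> x xF; rewrite negbK => /forall_inP agr.
  have [hx hxd xdF] := pair_familyP pd hd xF.
  exists x; split=> //; apply/eqP.
    by have := agr x (set21 _ _); rewrite xF.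
  by have := agr (x + d)%R (set22 _ _); rewrite (negPf xdF).
- move=> d d0 i; have := goodF (inr (d, i)).
  rewrite /= (negPf d0) inE => /forall_inPn[x xF]; rewrite negbK => /forall_inP agr.
  have [hx xd0 lxd] := heavy_light_familyP k_gt0 d0 xF.
  by exists x; split=> //; apply/eqP; apply: agr; rewrite set11.
Qed.

End RandomHeavyColouring.

Theorem mainTheorem2 :
  (forall n : nat, 2 <= n ->
     exists K : nat, forall k : nat, K <= k ->
       representable_over n 'rV['F_2]_(3 * k + 1))
  /\
  (forall n : nat, 14 <= n ->
     representable_over n 'rV['F_2]_(3 * n + 1)).
Proof.
split=> [n n2 | n n14]; last by apply: representable_rV_F2; lia.
by exists (maxn n 14) => k; rewrite geq_max => /andP[nk k14]; apply: representable_rV_F2; lia.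
Qed.
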